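(* Let $N'$ be a positive integer. For every integer $c$ with $1\le c\le 2N'-1$ and every $s\in\mathbb{C}$ with $\Re(s)>2$, $$\zeta(-c,s+c)=\sum_{d=1}^{N'}\frac{a_{c+1,d}}{2}\,T(-d+1,-d+1;s+2d-2).$$
   Context: For $\Re(s)>2$ and an integer $c\ge0$, $\zeta(-c,s+c)=\sum_{1\le n_1<n_2} n_1^{c}n_2^{-s-c}=\sum_{m,n\ge1}m^c(m+n)^{-s-c}$ (Euler–Zagier double zeta function). $T(s_1,s_2;s):=\sum_{m,n\ge1} m^{-s_1}n^{-s_2}(m+n)^{-s}$ is the Tornheim double zeta function. $(a_{c,d})_{c,d\ge1}$ are the integers defined by: $a_{c,1}=1$ for $c\ge1$; $a_{1,d}=a_{2,d}=0$ for $d\ge2$; $a_{3,2}=-2$ and $a_{3,d}=0$ for $d\ge3$; and $a_{c+2,d+1}=a_{c+1,d+1}-a_{c,d}$ for $c\ge2$, $d\ge1$. *)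

From Stdlib Require Import Reals ZArith.
From Coquelicot Require Import Coquelicot.
Open Scope R_scope.

(* n^s := exp(s log n) for a positive integer n and complex s *)
Definition npow (n : nat) (s : C) : C :=
  let L := ln (INR n) in
  (exp (Re s * L) * cos (Im s * L), exp (Re s * L) * sin (Im s * L)).

Definition CSeries (a : nat -> C) : C :=
  (Series (fun k => Re (a k)), Series (fun k => Im (a k))).

(* Tornheim double zeta: T(s1,s2;s) = sum_{m,n>=1} m^{-s1} n^{-s2} (m+n)^{-s} *)
Definition Tornheim (s1 s2 s : C) : C :=
  CSeries (fun m => CSeries (fun n =>
    (npow (S m) (- s1) * npow (S n) (- s2) * npow (S m + S n) (- s))%C)).

(* Euler-Zagier double zeta: zeta(s1,s2) = sum_{1<=n1<n2} n1^{-s1} n2^{-s2}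
   = sum_{m,n>=1} m^{-s1} (m+n)^{-s2} *)
Definition EZzeta2 (s1 s2 : C) : C :=
  CSeries (fun m => CSeries (fun n =>
    (npow (S m) (- s1) * npow (S m + S n) (- s2))%C)).

(* the integers a_{c,d} (c,d >= 1); values at index 0 are irrelevant (set 0) *)
Fixpoint acoef (c : nat) : nat -> Z :=
  match c with
  | 0%nat => fun _ => 0%Z
  | 1%nat | 2%nat => fun d => match d with 1%nat => 1%Z | _ => 0%Z end
  | 3%nat => fun d => match d with 1%nat => 1%Z | 2%nat => (-2)%Z | _ => 0%Z end
  | S ((S ((S (S _)) as c2)) as c3) => fun d =>
      match d with
      | 0%nat => 0%Z
      | 1%nat => 1%Z
      | S d' => (acoef c3 (S d') - acoef c2 d')%Z
      end
  end.

From Stdlib Require Import Reals ZArith Lra Lia.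
From Coquelicot Require Import Coquelicot.
Open Scope R_scope.

(* Put x = m/(m+n) and y = n/(m+n).  Then x + y = 1, so the power sums obey
   x^(c+2) + y^(c+2) = (x^(c+1) + y^(c+1)) - xy (x^c + y^c), the same recurrence
   as the a_{c,d}; hence x^c + y^c = sum_{d<=N} a_{c+1,d} (xy)^(d-1) once c+1 <= 2N.
   The summand of zeta(-c,s+c) is x^c (m+n)^(-s), that of T(1-d,1-d;s+2d-2) is
   (xy)^(d-1) (m+n)^(-s).  Since |(m+n)^(-s)| <= m^(-Re s/2) n^(-Re s/2) with
   Re s/2 > 1, the double series may be transposed, which replaces x^c by y^c;
   averaging the two expressions and expanding gives the identity. *)

Lemma ex_series_nonneg_bounded (a : nat -> R) (M : R) :
  (forall n, 0 <= a n) -> (forall n, sum_n a n <= M) -> ex_series a.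
Proof.
  intros Ha HM.
  destruct (ex_finite_lim_seq_incr (sum_n a) M) as [l Hl]; [|exact HM|now exists l].
  intros n. rewrite sum_Sn. specialize (Ha (S n)).
  change (sum_n a n <= sum_n a n + a (S n)). lra.
Qed.

Lemma ln_le_sub_1 (x : R) : 0 < x -> ln x <= x - 1.
Proof. intros Hx. pose proof (exp_ineq1_le (ln x)) as H. rewrite exp_ln in H; lra. Qed.

Lemma Rpower_pos (x y : R) : 0 < Rpower x y.
Proof. apply exp_pos. Qed.

Lemma Rpower_1_l (y : R) : Rpower 1 y = 1.
Proof. unfold Rpower. rewrite ln_1, Rmult_0_r. apply exp_0. Qed.

(* Tangent-line inequality at [k + 1] for the convex function [t |-> t^(-q)]. *)
Lemma Rpower_opp_telescope (q k : R) : 0 < q -> 0 < k ->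
  q * Rpower (k + 1) (- (q + 1)) <= Rpower k (- q) - Rpower (k + 1) (- q).
Proof.
  intros Hq Hk.
  set (P := Rpower (k + 1) (- q)).
  assert (HP : 0 < P) by apply Rpower_pos.
  assert (Hstep : Rpower (k + 1) (- (q + 1)) = P / (k + 1)).
  { replace (- (q + 1)) with (- q + - (1)) by ring.
    rewrite Rpower_plus, (Rpower_Ropp (k + 1) 1), Rpower_1 by lra. reflexivity. }
  assert (Hln : ln k - ln (k + 1) <= - / (k + 1)).
  { rewrite <- ln_div by lra. eapply Rle_trans; [apply ln_le_sub_1, Rdiv_lt_0_compat; lra|].
    right. field. lra. }
  assert (Hconv : P * (1 - q * (ln k - ln (k + 1))) <= Rpower k (- q)).
  { unfold P, Rpower.
    replace (- q * ln k) with (- q * ln (k + 1) + - q * (ln k - ln (k + 1))) by ring.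
    rewrite exp_plus. apply Rmult_le_compat_l; [left; apply exp_pos|].
    pose proof (exp_ineq1_le (- q * (ln k - ln (k + 1)))). lra. }
  rewrite Hstep.
  assert (P * (q * / (k + 1)) <= P * (- q * (ln k - ln (k + 1)))).
  { apply Rmult_le_compat_l; nra. }
  unfold Rdiv. nra.
Qed.

Lemma ex_series_Rpower_opp (p : R) : 1 < p -> ex_series (fun k => Rpower (INR (S k)) (- p)).
Proof.
  intros Hp. apply ex_series_incr_1.
  set (a := fun k => Rpower (INR (S (S k))) (- p)).
  assert (Hpartial : forall n, (p - 1) * sum_n a n <= 1 - Rpower (INR (S (S n))) (- (p - 1))).
  { assert (Htel : forall k, (p - 1) * a k <=
       Rpower (INR (S k)) (- (p - 1)) - Rpower (INR (S (S k))) (- (p - 1))).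
    { intros k. unfold a. rewrite (S_INR (S k)).
      replace (- p) with (- ((p - 1) + 1)) by ring.
      apply Rpower_opp_telescope; [lra | apply lt_0_INR; lia]. }
    induction n as [|n IH].
    - rewrite sum_O. specialize (Htel 0%nat). rewrite Rpower_1_l in Htel. exact Htel.
    - rewrite sum_Sn. specialize (Htel (S n)). change (plus ?x ?y) with (x + y). lra. }
  apply ex_series_nonneg_bounded with (M := / (p - 1)).
  - intros n. left. apply Rpower_pos.
  - intros n. specialize (Hpartial n). pose proof (Rpower_pos (INR (S (S n))) (- (p - 1))).
    apply Rmult_le_reg_l with (p - 1); [lra|]. rewrite Rinv_r; lra.
Qed.

Lemma ex_series_Rabs_le (a b : nat -> R) :
  (forall n, Rabs (a n) <= b n) -> ex_series b -> ex_series a.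
Proof. exact (@ex_series_le R_AbsRing R_CompleteNormedModule a b). Qed.

Lemma Series_Rabs_le (a b : nat -> R) :
  (forall n, Rabs (a n) <= b n) -> ex_series b -> Rabs (Series a) <= Series b.
Proof.
  intros Hab Hb. eapply Rle_trans; [apply Series_Rabs|].
  - apply ex_series_Rabs_le with b; [|exact Hb]. intros n. rewrite Rabs_Rabsolu. apply Hab.
  - apply Series_le; [|exact Hb]. intros n. split; [apply Rabs_pos | apply Hab].
Qed.

Lemma Series_Rabs_le_scal (a b : nat -> R) (C : R) :
  (forall n, Rabs (a n) <= C * b n) -> ex_series b -> Rabs (Series a) <= C * Series b.
Proof.
  intros Hab Hb. rewrite <- Series_scal_l. apply Series_Rabs_le; [exact Hab|].
  exact (@ex_series_scal_l R_AbsRing R_NormedModule _ _ Hb).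
Qed.

Lemma is_lim_seq_Series_tail (a : nat -> R) :
  ex_series a -> is_lim_seq (fun M => Series (fun k => a (S M + k)%nat)) 0.
Proof.
  intros Ha.
  apply is_lim_seq_ext with (fun M => Series a - sum_n a M).
  { intros M. rewrite (Series_incr_n a (S M)), sum_n_Reals by (lia || exact Ha). simpl pred. ring. }
  replace 0 with (Series a - Series a) by ring.
  apply is_lim_seq_minus'; [apply is_lim_seq_const | apply Series_correct, Ha].
Qed.

Lemma is_lim_seq_of_Rabs_sub_le (u t : nat -> R) (l C : R) :
  (forall n, Rabs (u n - l) <= C * t n) -> is_lim_seq t 0 -> is_lim_seq u l.
Proof.
  intros Hb Ht.
  assert (HCt : is_lim_seq (fun n => C * t n) 0).
  { replace (Finite 0) with (Rbar_mult C 0) by (simpl; f_equal; ring).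
    apply is_lim_seq_scal_l, Ht. }
  apply is_lim_seq_le_le with (fun n => l - C * t n) (fun n => l + C * t n).
  - intros n. specialize (Hb n). apply Rabs_le_between in Hb. lra.
  - pose proof (is_lim_seq_minus' _ _ _ _ (is_lim_seq_const l) HCt) as H.
    now rewrite Rminus_0_r in H.
  - pose proof (is_lim_seq_plus' _ _ _ _ (is_lim_seq_const l) HCt) as H.
    now rewrite Rplus_0_r in H.
Qed.

Lemma ex_series_sum_n (f : nat -> nat -> R) (M : nat) :
  (forall m, ex_series (f m)) -> ex_series (fun n => sum_n (fun m => f m n) M).
Proof.
  intros Hf. induction M as [|M IH].
  - apply (ex_series_ext (f 0%nat)); [intros n; now rewrite sum_O | apply Hf].
  - apply (ex_series_ext (fun n => sum_n (fun m => f m n) M + f (S M) n)).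
    + intros n. now rewrite sum_Sn.
    + exact (@ex_series_plus R_AbsRing R_NormedModule _ _ IH (Hf (S M))).
Qed.

Lemma sum_n_Series (f : nat -> nat -> R) (M : nat) :
  (forall m, ex_series (f m)) ->
  sum_n (fun m => Series (f m)) M = Series (fun n => sum_n (fun m => f m n) M).
Proof.
  intros Hf. induction M as [|M IH].
  - rewrite sum_O. apply Series_ext. intros n. now rewrite sum_O.
  - rewrite sum_Sn, IH. change (plus ?x ?y) with (x + y).
    rewrite <- Series_plus by (apply ex_series_sum_n || apply Hf; exact Hf).
    apply Series_ext. intros n. now rewrite sum_Sn.
Qed.

Definition double_series (f : nat -> nat -> R) : R := Series (fun m => Series (f m)).

Lemma double_series_ext (f h : nat -> nat -> R) :
  (forall m n, f m n = h m n) -> double_series f = double_series h.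
Proof. intros H. apply Series_ext. intros m. apply Series_ext, H. Qed.

Lemma double_series_scal (c : R) (f : nat -> nat -> R) :
  double_series (fun m n => c * f m n) = c * double_series f.
Proof.
  unfold double_series. rewrite <- Series_scal_l.
  apply Series_ext. intros m. apply Series_scal_l.
Qed.

Section Dominated.

Variable g : nat -> R.
Hypothesis g_summable : ex_series g.

Definition dominated (f : nat -> nat -> R) : Prop :=
  exists K, forall m n, Rabs (f m n) <= K * (g m * g n).

Lemma dominated_le (f h : nat -> nat -> R) :
  (forall m n, Rabs (f m n) <= Rabs (h m n)) -> dominated h -> dominated f.
Proof. intros Hfh [K HK]. exists K. intros m n. eapply Rle_trans; [apply Hfh | apply HK]. Qed.

Lemma dominated_transpose (f : nat -> nat -> R) :
  dominated f -> dominated (fun m n => f n m).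
Proof. intros [K HK]. exists K. intros m n. rewrite (Rmult_comm (g m)). apply HK. Qed.

Lemma dominated_plus (f h : nat -> nat -> R) :
  dominated f -> dominated h -> dominated (fun m n => f m n + h m n).
Proof.
  intros [K1 H1] [K2 H2]. exists (K1 + K2). intros m n.
  eapply Rle_trans; [apply Rabs_triang|]. specialize (H1 m n). specialize (H2 m n). lra.
Qed.

Lemma dominated_scal (c : R) (f : nat -> nat -> R) :
  dominated f -> dominated (fun m n => c * f m n).
Proof.
  intros [K HK]. exists (Rabs c * K). intros m n.
  rewrite Rabs_mult, Rmult_assoc. apply Rmult_le_compat_l; [apply Rabs_pos | apply HK].
Qed.

Lemma dominated_mult_bounded (u f : nat -> nat -> R) :
  (forall m n, Rabs (u m n) <= 1) -> dominated f -> dominated (fun m n => u m n * f m n).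
Proof.
  intros Hu. apply dominated_le. intros m n. rewrite Rabs_mult.
  pose proof (Rabs_pos (f m n)). specialize (Hu m n). nra.
Qed.

Lemma dominated_ex_series_row (f : nat -> nat -> R) :
  dominated f -> forall m, ex_series (f m).
Proof.
  intros [K HK] m. apply ex_series_Rabs_le with (fun n => K * g m * g n).
  - intros n. rewrite Rmult_assoc. apply HK.
  - exact (@ex_series_scal_l R_AbsRing R_NormedModule _ _ g_summable).
Qed.

Lemma dominated_ex_series_rows (f : nat -> nat -> R) :
  dominated f -> ex_series (fun m => Series (f m)).
Proof.
  intros [K HK]. apply ex_series_Rabs_le with (fun m => K * Series g * g m).
  - intros m. rewrite Rmult_assoc, (Rmult_comm (Series g)), <- Rmult_assoc.
    apply Series_Rabs_le_scal; [|exact g_summable]. intros n. rewrite Rmult_assoc. apply HK.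
  - exact (@ex_series_scal_l R_AbsRing R_NormedModule _ _ g_summable).
Qed.

Lemma double_series_plus (f h : nat -> nat -> R) :
  dominated f -> dominated h ->
  double_series (fun m n => f m n + h m n) = double_series f + double_series h.
Proof.
  intros Hf Hh. unfold double_series.
  rewrite <- Series_plus by (apply dominated_ex_series_rows; assumption).
  apply Series_ext. intros m.
  apply Series_plus; apply dominated_ex_series_row; assumption.
Qed.

Lemma double_series_transpose_partial_bound (f : nat -> nat -> R) (K : R) (M : nat) :
  (forall m n, Rabs (f m n) <= K * (g m * g n)) ->
  Rabs (sum_n (fun m => Series (f m)) M - double_series (fun m n => f n m))
  <= K * Series g * Series (fun k => g (S M + k)%nat).
Proof.
  intros HK.
  assert (Hrow : forall m, ex_series (f m))
    by (apply dominated_ex_series_row; now exists K).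
  assert (Hcol : dominated (fun m n => f n m)) by (apply dominated_transpose; now exists K).
  rewrite sum_n_Series by exact Hrow. unfold double_series.
  rewrite <- Series_minus
    by (apply ex_series_sum_n, Hrow || apply dominated_ex_series_rows, Hcol).
  rewrite (Series_ext _ (fun n => - Series (fun k => f (S M + k)%nat n))).
  - rewrite Series_opp, Rabs_Ropp, Rmult_assoc, (Rmult_comm (Series g)), <- Rmult_assoc.
    apply Series_Rabs_le_scal; [intros n | exact g_summable].
    rewrite Rmult_assoc, (Rmult_comm _ (g n)), <- Rmult_assoc.
    apply Series_Rabs_le_scal; [intros k | now apply ex_series_incr_n].
    rewrite Rmult_assoc, (Rmult_comm (g n)). apply HK.
  - intros n.
    rewrite (Series_incr_n (fun m => f m n) (S M)), sum_n_Reals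
      by (lia || apply (dominated_ex_series_row _ Hcol n)).
    simpl pred. ring.
Qed.

Lemma double_series_transpose (f : nat -> nat -> R) :
  dominated f -> double_series f = double_series (fun m n => f n m).
Proof.
  intros [K HK]. apply is_series_unique.
  apply is_lim_seq_of_Rabs_sub_le with
    (C := K * Series g) (t := fun M => Series (fun k => g (S M + k)%nat)).
  - intros M. now apply double_series_transpose_partial_bound.
  - now apply is_lim_seq_Series_tail.
Qed.

Lemma dominated_sum_n_m (F : nat -> nat -> nat -> R) (a b : nat) :
  (forall d, dominated (F d)) -> dominated (fun m n => sum_n_m (fun d => F d m n) a b).
Proof.
  intros HF. destruct (le_lt_dec a b) as [Hab|Hba].
  - induction Hab as [|b Hab IH].
    + apply (dominated_le _ (F a)); [intros m n; now rewrite sum_n_n | apply HF].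
    + apply (dominated_le _ (fun m n => sum_n_m (fun d => F d m n) a b + F (S b) m n)).
      * intros m n. now rewrite sum_n_Sm by lia.
      * apply dominated_plus; [exact IH | apply HF].
  - exists 0. intros m n. rewrite sum_n_m_zero by exact Hba.
    change (Rabs 0 <= 0 * (g m * g n)). rewrite Rabs_R0. lra.
Qed.

Lemma double_series_sum_n_m (F : nat -> nat -> nat -> R) (a b : nat) :
  (forall d, dominated (F d)) ->
  double_series (fun m n => sum_n_m (fun d => F d m n) a b)
  = sum_n_m (fun d => double_series (F d)) a b.
Proof.
  intros HF. destruct (le_lt_dec a b) as [Hab|Hba].
  - induction Hab as [|b Hab IH].
    + rewrite sum_n_n. apply double_series_ext. intros m n. now rewrite sum_n_n.
    + rewrite sum_n_Sm by lia. change (plus ?x ?y) with (x + y). rewrite <- IH.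
      rewrite <- double_series_plus by (apply dominated_sum_n_m || apply HF; exact HF).
      apply double_series_ext. intros m n. now rewrite sum_n_Sm by lia.
  - rewrite sum_n_m_zero by exact Hba.
    rewrite (double_series_ext _ (fun m n => 0 * 0)).
    + rewrite double_series_scal, Rmult_0_l. reflexivity.
    + intros m n. rewrite sum_n_m_zero by exact Hba. symmetry. apply Rmult_0_l.
Qed.

End Dominated.

(* Coquelicot's [sum_n_m] lemmas restated over [R] itself: the generic versions
   leave [plus], [mult] or the carrier [AbelianMonoid.sort _], which [ring] and
   [field] do not recognise. *)
Lemma sum_n_m_Rext (u v : nat -> R) (n m : nat) :
  (forall k, u k = v k) -> sum_n_m u n m = sum_n_m v n m.
Proof. exact (sum_n_m_ext u v n m). Qed.

Lemma sum_n_m_Rplus (u v : nat -> R) (n m : nat) :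
  sum_n_m (fun k => u k + v k) n m = sum_n_m u n m + sum_n_m v n m.
Proof. exact (sum_n_m_plus u v n m). Qed.

Lemma sum_n_m_Rmult_l (a : R) (u : nat -> R) (n m : nat) :
  sum_n_m (fun k => a * u k) n m = a * sum_n_m u n m.
Proof. exact (sum_n_m_mult_l a u n m). Qed.

Definition acoef_sum (c N : nat) (t : R) : R :=
  sum_n_m (fun d => IZR (acoef c d) * t ^ (d - 1)) 1 N.

Lemma acoef_1 (c : nat) : (1 <= c)%nat -> acoef c 1 = 1%Z.
Proof. intros Hc. destruct c as [|[|[|[|c]]]]; reflexivity || lia. Qed.

Lemma acoef_rec (c d : nat) : (2 <= c)%nat ->
  acoef (S (S c)) (S (S d)) = (acoef (S c) (S (S d)) - acoef c (S d))%Z.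
Proof. intros Hc. destruct c as [|[|c]]; reflexivity || lia. Qed.

Lemma acoef_sum_rec (c N : nat) (t : R) : (2 <= c)%nat ->
  acoef_sum (S (S c)) (S N) t = acoef_sum (S c) (S N) t - t * acoef_sum c N t.
Proof.
  intros Hc. unfold acoef_sum.
  rewrite !(sum_Sn_m _ 1 (S N)), <- !sum_n_m_S, !acoef_1 by lia.
  change (plus ?x ?y) with (x + y).
  rewrite (sum_n_m_ext_loc _ (fun d => IZR (acoef (S c) (S d)) * t ^ d
                                         + -1 * (t * (IZR (acoef c d) * t ^ (d - 1))))).
  - rewrite sum_n_m_Rplus, !sum_n_m_Rmult_l.
    rewrite (sum_n_m_ext (fun d => IZR (acoef (S c) (S d)) * t ^ (S d - 1))
                         (fun d => IZR (acoef (S c) (S d)) * t ^ d)).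
    + ring.
    + intros d. now rewrite Nat.sub_succ, Nat.sub_0_r.
  - intros d Hd. destruct d as [|d]; [lia|].
    rewrite acoef_rec, minus_IZR by exact Hc.
    rewrite Nat.sub_succ, Nat.sub_0_r, Nat.sub_succ, Nat.sub_0_r. simpl. ring.
Qed.

Lemma acoef_sum_2 (N : nat) (t : R) : (1 <= N)%nat -> acoef_sum 2 N t = 1.
Proof.
  intros HN. unfold acoef_sum. rewrite sum_Sn_m by exact HN.
  rewrite (sum_n_m_ext_loc _ (fun _ => zero)), sum_n_m_const_zero.
  - change (1 * 1 + 0 = 1). ring.
  - intros d Hd. destruct d as [|[|[|d]]]; try lia; simpl; change zero with 0; ring.
Qed.

Lemma acoef_sum_3 (N : nat) (t : R) : (2 <= N)%nat -> acoef_sum 3 N t = 1 - 2 * t.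
Proof.
  intros HN. unfold acoef_sum. rewrite !sum_Sn_m by lia.
  rewrite (sum_n_m_ext_loc _ (fun _ => zero)), sum_n_m_const_zero.
  - change (1 * 1 + (-2 * (t * 1) + 0) = 1 - 2 * t). ring.
  - intros d Hd. destruct d as [|[|[|d]]]; try lia; simpl; change zero with 0; ring.
Qed.

Lemma pow_add_pow_one_sub (x : R) (c N : nat) : (1 <= c)%nat -> (c + 1 <= 2 * N)%nat ->
  x ^ c + (1 - x) ^ c = acoef_sum (S c) N (x * (1 - x)).
Proof.
  set (P := fun c => forall M, (c + 1 <= 2 * M)%nat ->
                     x ^ c + (1 - x) ^ c = acoef_sum (S c) M (x * (1 - x))).
  assert (Hind : forall k, P (S k) /\ P (S (S k))).
  { induction k as [|k [IH1 IH2]].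
    - split; intros M HM.
      + rewrite acoef_sum_2 by lia. ring.
      + rewrite acoef_sum_3 by lia. ring.
    - split; [exact IH2|]. intros M HM. destruct M as [|M]; [lia|].
      rewrite acoef_sum_rec, <- IH2, <- IH1 by lia. simpl. ring. }
  intros Hc. destruct c as [|c]; [lia|]. apply Hind.
Qed.

(* The summation indices are shifted: [ratio m n] is the paper's m/(m+n) at (m+1, n+1). *)
Definition ratio (m n : nat) : R := INR (S m) / INR (S m + S n).

Lemma ratio_transpose (m n : nat) : ratio n m = 1 - ratio m n.
Proof.
  unfold ratio. rewrite Nat.add_comm, plus_INR.
  pose proof (lt_0_INR (S m) ltac:(lia)). pose proof (lt_0_INR (S n) ltac:(lia)).
  field. lra.
Qed.

Lemma Rabs_ratio_le_1 (m n : nat) : Rabs (ratio m n) <= 1.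
Proof.
  assert (Hpos : forall i j, 0 <= ratio i j).
  { intros i j. apply Rdiv_le_0_compat; apply pos_INR || (apply lt_0_INR; lia). }
  pose proof (ratio_transpose m n). pose proof (Hpos m n). pose proof (Hpos n m).
  apply Rabs_le. lra.
Qed.

Lemma Rabs_pow_le_1 (x : R) (e : nat) : Rabs x <= 1 -> Rabs (x ^ e) <= 1.
Proof.
  intros Hx. rewrite <- RPow_abs, <- (pow1 e).
  apply pow_incr. split; [apply Rabs_pos | exact Hx].
Qed.

Section RatioSeries.

Variable g : nat -> R.
Hypothesis g_summable : ex_series g.
Variable r : nat -> nat -> R.
Hypothesis r_dominated : dominated g r.
Hypothesis r_symmetric : forall m n, r m n = r n m.

Lemma dominated_pow_mult (x : nat -> nat -> R) (e : nat) :
  (forall m n, Rabs (x m n) <= 1) -> dominated g (fun m n => x m n ^ e * r m n).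
Proof.
  intros Hx. apply dominated_mult_bounded; [|exact r_dominated].
  intros m n. apply Rabs_pow_le_1, Hx.
Qed.

Lemma double_series_ratio_pow_symmetrize (c : nat) :
  double_series (fun m n => ratio m n ^ c * r m n)
  = / 2 * double_series (fun m n => (ratio m n ^ c + ratio n m ^ c) * r m n).
Proof.
  assert (Htr : double_series (fun m n => ratio m n ^ c * r m n)
                = double_series (fun m n => ratio n m ^ c * r m n)).
  { rewrite double_series_transpose with (g := g)
      by (exact g_summable || now apply dominated_pow_mult, Rabs_ratio_le_1).
    apply double_series_ext. intros m n. now rewrite r_symmetric. }
  rewrite (double_series_ext (fun m n => (ratio m n ^ c + ratio n m ^ c) * r m n)
                             (fun m n => ratio m n ^ c * r m n + ratio n m ^ c * r m n))
    by (intros; ring).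
  rewrite double_series_plus with (g := g), <- Htr;
    [field | exact g_summable | ..]; apply dominated_pow_mult; intros; apply Rabs_ratio_le_1.
Qed.

Lemma double_series_ratio_pow (c N : nat) : (1 <= c)%nat -> (c + 1 <= 2 * N)%nat ->
  double_series (fun m n => ratio m n ^ c * r m n)
  = sum_n_m (fun d => IZR (acoef (S c) d) / 2
                      * double_series (fun m n => (ratio m n * ratio n m) ^ (d - 1) * r m n)) 1 N.
Proof.
  intros Hc HcN. rewrite double_series_ratio_pow_symmetrize.
  rewrite (double_series_ext _ (fun m n => sum_n_m (fun d => IZR (acoef (S c) d)
             * ((ratio m n * ratio n m) ^ (d - 1) * r m n)) 1 N)).
  - rewrite double_series_sum_n_m with (g := g), <- sum_n_m_Rmult_l.
    + apply sum_n_m_Rext. intros d. rewrite double_series_scal. field.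
    + exact g_summable.
    + intros d. apply dominated_scal, dominated_pow_mult. intros m n. rewrite Rabs_mult.
      pose proof (Rabs_ratio_le_1 m n). pose proof (Rabs_ratio_le_1 n m).
      pose proof (Rabs_pos (ratio m n)). pose proof (Rabs_pos (ratio n m)). nra.
  - intros m n. rewrite (ratio_transpose m n), pow_add_pow_one_sub with (N := N) by assumption.
    unfold acoef_sum. rewrite Rmult_comm, <- sum_n_m_Rmult_l.
    apply sum_n_m_Rext. intros d. ring.
Qed.

End RatioSeries.

Lemma Rpower_mul_Rpower_opp (p K : R) (e : nat) : 0 < p -> 0 < K ->
  Rpower p (INR e) * Rpower K (- INR e) = (p / K) ^ e.
Proof.
  intros Hp HK. rewrite Rpower_Ropp, !Rpower_pow by assumption.
  unfold Rdiv. rewrite Rpow_mult_distr, pow_inv. reflexivity.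
Qed.

Lemma Rpower_opp_add_le (a : R) (m n : nat) : 0 <= a ->
  Rpower (INR (S m + S n)) (- a)
  <= Rpower (INR (S m)) (- (a / 2)) * Rpower (INR (S n)) (- (a / 2)).
Proof.
  intros Ha. unfold Rpower. rewrite <- exp_plus.
  pose proof (lt_0_INR (S m) ltac:(lia)). pose proof (lt_0_INR (S n) ltac:(lia)).
  assert (Hln : ln (INR (S m)) + ln (INR (S n)) <= 2 * ln (INR (S m + S n))).
  { rewrite <- ln_mult, plus_INR by assumption.
    replace (2 * ln (INR (S m) + INR (S n)))
      with (ln ((INR (S m) + INR (S n)) * (INR (S m) + INR (S n)))) by (rewrite ln_mult; lra).
    apply ln_le; nra. }
  assert (Hexp : - a * ln (INR (S m + S n))
                 <= - (a / 2) * ln (INR (S m)) + - (a / 2) * ln (INR (S n))) by nra.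
  destruct Hexp as [Hlt|Heq]; [left; now apply exp_increasing | right; now rewrite Heq].
Qed.

Lemma npow_add (k : nat) (u v : C) : npow k (u + v) = (npow k u * npow k v)%C.
Proof.
  destruct u as [a b], v as [a' b']. unfold npow. cbn [Re Im fst snd Cplus Cmult].
  set (L := ln (INR k)).
  rewrite !Rmult_plus_distr_r, exp_plus, cos_plus, sin_plus.
  apply injective_projections; simpl; ring.
Qed.

Lemma npow_RtoC (k : nat) (r : R) : npow k (RtoC r) = RtoC (Rpower (INR k) r).
Proof.
  unfold npow, RtoC, Rpower. cbn [Re Im fst snd].
  rewrite Rmult_0_l, cos_0, sin_0. f_equal; ring.
Qed.

Lemma Cmod_npow (k : nat) (z : C) : Cmod (npow k z) = Rpower (INR k) (Re z).
Proof.
  unfold Cmod, npow, Rpower. cbn [fst snd].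
  set (E := exp (Re z * ln (INR k))). set (t := Im z * ln (INR k)).
  replace ((E * cos t) ^ 2 + (E * sin t) ^ 2) with (E ^ 2 * ((sin t)² + (cos t)²))
    by (unfold Rsqr; ring).
  rewrite sin2_cos2, Rmult_1_r. apply sqrt_pow2. left. apply exp_pos.
Qed.

Lemma Rabs_Im_le_Cmod (z : C) : Rabs (Im z) <= Cmod z.
Proof.
  eapply Rle_trans; [apply Rmax_r | apply (proj1 (sqrt_plus_sqr (fst z) (snd z)))].
Qed.

Lemma C_ext (z w : C) : Re z = Re w -> Im z = Im w -> z = w.
Proof. destruct z, w. simpl. intros -> ->. reflexivity. Qed.

Lemma sum_n_m_C (F : nat -> C) (n m : nat) :
  sum_n_m F n m = (sum_n_m (fun k => Re (F k)) n m, sum_n_m (fun k => Im (F k)) n m).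
Proof.
  induction m as [|m IH].
  - destruct n as [|n].
    + rewrite !sum_n_n. now destruct (F 0%nat).
    + now rewrite !sum_n_m_zero by lia.
  - destruct (le_lt_dec n (S m)) as [Hnm|Hnm].
    + now rewrite !sum_n_Sm, IH by exact Hnm.
    + now rewrite !sum_n_m_zero by lia.
Qed.

Lemma Re_sum_n_m (F : nat -> C) (n m : nat) :
  Re (sum_n_m F n m) = sum_n_m (fun k => Re (F k)) n m.
Proof. now rewrite sum_n_m_C. Qed.

Lemma Im_sum_n_m (F : nat -> C) (n m : nat) :
  Im (sum_n_m F n m) = sum_n_m (fun k => Im (F k)) n m.
Proof. now rewrite sum_n_m_C. Qed.

Lemma CSeries_ext (a b : nat -> C) : (forall k, a k = b k) -> CSeries a = CSeries b.
Proof. intros H. unfold CSeries. f_equal; apply Series_ext; intros k; now rewrite H. Qed.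

Lemma Re_double_CSeries (u : nat -> nat -> R) (w : nat -> nat -> C) :
  Re (CSeries (fun m => CSeries (fun n => (RtoC (u m n) * w m n)%C)))
  = double_series (fun m n => u m n * Re (w m n)).
Proof. apply double_series_ext. intros m n. apply re_scal_l. Qed.

Lemma Im_double_CSeries (u : nat -> nat -> R) (w : nat -> nat -> C) :
  Im (CSeries (fun m => CSeries (fun n => (RtoC (u m n) * w m n)%C)))
  = double_series (fun m n => u m n * Im (w m n)).
Proof. apply double_series_ext. intros m n. apply im_scal_l. Qed.

Lemma npow_EZzeta2_term (s : C) (c m n : nat) :
  (npow (S m) (- RtoC (- INR c)) * npow (S m + S n) (- (s + RtoC (INR c))))%C
  = (RtoC (ratio m n ^ c) * npow (S m + S n) (- s))%C.
Proof.
  rewrite <- RtoC_opp, Ropp_involutive, Copp_plus_distr, <- RtoC_opp, npow_add, !npow_RtoC.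
  unfold ratio. rewrite <- Rpower_mul_Rpower_opp by (apply lt_0_INR; lia).
  rewrite RtoC_mult. ring.
Qed.

Lemma npow_Tornheim_term (s : C) (d m n : nat) : (1 <= d)%nat ->
  (npow (S m) (- RtoC (1 - INR d)) * npow (S n) (- RtoC (1 - INR d))
   * npow (S m + S n) (- (s + RtoC (2 * INR d - 2))))%C
  = (RtoC ((ratio m n * ratio n m) ^ (d - 1)) * npow (S m + S n) (- s))%C.
Proof.
  intros Hd.
  replace (1 - INR d) with (- INR (d - 1)) by (rewrite minus_INR by exact Hd; simpl; ring).
  replace (2 * INR d - 2) with (INR (d - 1) + INR (d - 1))
    by (rewrite minus_INR by exact Hd; simpl; ring).
  rewrite <- RtoC_opp, Ropp_involutive, Copp_plus_distr, <- RtoC_opp, npow_add, !npow_RtoC.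
  rewrite Ropp_plus_distr, Rpower_plus, Rpow_mult_distr.
  unfold ratio. rewrite (Nat.add_comm (S n)).
  rewrite <- !Rpower_mul_Rpower_opp by (apply lt_0_INR; lia).
  rewrite !RtoC_mult. ring.
Qed.

Lemma Cmod_npow_add_dominated (s : C) : 2 < Re s ->
  dominated (fun j => Rpower (INR (S j)) (- (Re s / 2)))
            (fun m n => Cmod (npow (S m + S n) (- s))).
Proof.
  intros Hs. exists 1. intros m n.
  rewrite Rmult_1_l, Rabs_pos_eq, Cmod_npow by apply Cmod_ge_0.
  destruct s as [a b]. apply Rpower_opp_add_le. simpl in Hs |- *. lra.
Qed.

Lemma double_CSeries_ratio_pow (g : nat -> R) (w : nat -> nat -> C) (c N : nat) :
  ex_series g ->
  dominated g (fun m n => Cmod (w m n)) -> (forall m n, w m n = w n m) ->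
  (1 <= c)%nat -> (c + 1 <= 2 * N)%nat ->
  CSeries (fun m => CSeries (fun n => (RtoC (ratio m n ^ c) * w m n)%C))
  = sum_n_m (fun d => (RtoC (IZR (acoef (S c) d) / 2)
      * CSeries (fun m => CSeries (fun n =>
          (RtoC ((ratio m n * ratio n m) ^ (d - 1)) * w m n)%C)))%C) 1 N.
Proof.
  intros g_summable Hw Hsym Hc HcN.
  assert (HRe : dominated g (fun m n => Re (w m n))).
  { apply (dominated_le g _ _ (fun m n => Rle_trans _ _ _ (re_le_Cmod _) (Rle_abs _)) Hw). }
  assert (HIm : dominated g (fun m n => Im (w m n))).
  { apply (dominated_le g _ _ (fun m n => Rle_trans _ _ _ (Rabs_Im_le_Cmod _) (Rle_abs _)) Hw). }
  apply C_ext.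
  - rewrite Re_sum_n_m, Re_double_CSeries.
    rewrite double_series_ratio_pow with (g := g) (N := N)
      by first [assumption | intros m n; now rewrite (Hsym m n)].
    apply sum_n_m_ext. intros d. now rewrite re_scal_l, Re_double_CSeries.
  - rewrite Im_sum_n_m, Im_double_CSeries.
    rewrite double_series_ratio_pow with (g := g) (N := N)
      by first [assumption | intros m n; now rewrite (Hsym m n)].
    apply sum_n_m_ext. intros d. now rewrite im_scal_l, Im_double_CSeries.
Qed.

Theorem proposition3p3 (N' : nat) (c : nat) (s : C) :
  (1 <= N')%nat -> (1 <= c)%nat -> (c <= 2 * N' - 1)%nat -> 2 < Re s ->
  EZzeta2 (RtoC (- INR c)) (s + RtoC (INR c))%C =
  sum_n_m (fun d : nat =>
    (RtoC (IZR (acoef (S c) d) / 2) *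
     Tornheim (RtoC (1 - INR d)) (RtoC (1 - INR d)) (s + RtoC (2 * INR d - 2)))%C)
    1 N'.
Proof.
  intros HN' Hc HcN Hs.
  transitivity (CSeries (fun m => CSeries (fun n =>
                  (RtoC (ratio m n ^ c) * npow (S m + S n) (- s))%C))).
  { apply CSeries_ext. intros m. apply CSeries_ext. intros n. apply npow_EZzeta2_term. }
  rewrite (double_CSeries_ratio_pow (fun j => Rpower (INR (S j)) (- (Re s / 2))))
    with (N := N').
  - apply sum_n_m_ext_loc. intros d Hd. f_equal. unfold Tornheim.
    apply CSeries_ext. intros m. apply CSeries_ext. intros n.
    symmetry. apply npow_Tornheim_term. lia.
  - apply ex_series_Rpower_opp. lra.
  - now apply Cmod_npow_add_dominated.
  - intros m n. now rewrite Nat.add_comm.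
  - exact Hc.
  - lia.
Qed.
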